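(* Let $q$ be even and let $H$ be the point-line incidence matrix of the Desarguesian projective plane $\mathrm{PG}(2,q)$, regarded as a binary matrix, and let $C=\ker(H)=\{c\in\mathbb{F}_2^{q^2+q+1} : cH^\top=0\}$ with minimum distance $d$. Then one round of the bit-flipping decoding algorithm with respect to $H$ corrects every error of Hamming weight at most $\lfloor\frac{d-1}{2}\rfloor$; that is, for every $c\in C$ and every $e\in\mathbb{F}_2^{q^2+q+1}$ with $\mathrm{wt}(e)\le\lfloor\frac{d-1}{2}\rfloor$, one round of bit-flipping applied to $y=c+e$ outputs $c$.
   Context: $\mathrm{PG}(2,q)$ is the projective plane whose points and lines are the 1- and 2-dimensional subspaces of $\mathbb{F}_q^3$; it has $q^2+q+1$ points and $q^2+q+1$ lines, each line contains $q+1$ points and each point lies on $q+1$ lines. Its incidence matrix has rows indexed by points and columns by lines, with entry $1$ iff the point lies on the line. For a binary matrix $H$ with $m$ rows, $n$ columns and constant column weight $v$, one round of the bit-flipping algorithm on input $y\in\mathbb{F}_2^n$ is: compute the syndrome $s=Hy^\top\in\mathbb{F}_2^m$; for each column $j$ let $u_j$ be the number of rows $i$ with $H_{ij}=1$ and $s_i=1$ (unsatisfied parity checks involving $j$); output $y$ with the bits in positions $\{j : u_j> v/2\}$ flipped. The Hamming weight $\mathrm{wt}(e)$ is the number of nonzero coordinates of $e$. *)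

From HB Require Import structures.
From mathcomp Require Import all_boot all_order all_algebra all_field.
Set Implicit Arguments. Unset Strict Implicit. Unset Printing Implicit Defensive.
Import GRing.Theory.
Local Open Scope ring_scope.

(* A k-dimensional subspace of F^3 is represented by its canonical
   row-space representative: a 3x3 matrix A with <<A>> = A and rank k.
   (mxalgebra: (A == B)%MS -> <<A>> = <<B>>, so this is a bijection.) *)
Definition subspace_of_dim (F : finFieldType) (k : nat) :=
  {A : 'M[F]_3 | (A == <<A>>%MS) && (\rank A == k)}.

Definition PGpoint (F : finFieldType) := subspace_of_dim F 1.
Definition PGline  (F : finFieldType) := subspace_of_dim F 2.

Definition PGinc (F : finFieldType) (p : PGpoint F) (l : PGline F) : bool :=
  (val p <= val l)%MS.

(* H has rows indexed by P (points), columns by L (lines);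
   H_{ij} = 1 iff inc i j.  Words are vectors in F_2^L. *)
Section Codes.
Variables (P L : finType) (inc : P -> L -> bool).

Definition syndrome (y : {ffun L -> 'F_2}) (i : P) : 'F_2 :=
  \sum_(j | inc i j) y j.

Definition code : pred {ffun L -> 'F_2} :=
  [pred c | [forall i, syndrome c i == 0]].

Definition wt (y : {ffun L -> 'F_2}) : nat := #|[set j | y j != 0]|.

(* minimum distance = minimum weight of a nonzero codeword
   (default #|L|.+1 if the code is trivial) *)
Definition mindist : nat :=
  \big[minn/#|L|.+1]_(c : {ffun L -> 'F_2} | (c \in code) && (0 < wt c)%N) wt c.

Definition unsat (y : {ffun L -> 'F_2}) (j : L) : nat :=
  #|[set i | inc i j && (syndrome y i != 0)]|.

Definition colweight (j : L) : nat := #|[set i | inc i j]|.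

(* one round of bit flipping: flip bit j iff u_j > v/2, i.e. 2 u_j > v *)
Definition bitflip (y : {ffun L -> 'F_2}) : {ffun L -> 'F_2} :=
  [ffun j => if (colweight j < 2 * unsat y j)%N then y j + 1 else y j].

End Codes.

(* One round of bit flipping corrects e as soon as every column has weight at
   least q and 2 wt(e) <= q.  Indeed, syndromes only see the error e, and since
   two lines of PG(2,q) share at most one point, each check on a line j whose
   syndrome disagrees with e_j lies on its own error line other than j; so at
   most wt(e) - e_j of the at least q checks on j vote wrongly.  For q even a
   dual hyperoval (q + 2 lines, every point on 0 or 2 of them) is a codeword,
   so d <= q + 2 and floor((d - 1)/2) <= q/2. *)

From HB Require Import structures.
From mathcomp Require Import all_boot all_order all_algebra all_field.
From mathcomp Require Import ring zify.
Set Implicit Arguments. Unset Strict Implicit. Unset Printing Implicit Defensive.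
Import Order.TTheory GRing.Theory.
Local Open Scope ring_scope.

Lemma F2_neq0 (x : 'F_2) : (x != 0) = (x == 1).
Proof. by case: x => [[|[|n]]]. Qed.

Lemma pchar_F2 : (2 \in [pchar 'F_2])%N.
Proof. exact: pchar_Fp. Qed.

Lemma F2_natr n : (n%:R : 'F_2) = (odd n)%:R.
Proof. by rewrite -(Fp_nat_mod (isT : prime 2)) modn2. Qed.

Lemma exists_neq0_summand (V : nmodType) (I : finType) (P : pred I) (F : I -> V) :
  \sum_(i | P i) F i != 0 -> exists2 i, P i & F i != 0.
Proof.
move=> nz; case: (pickP [pred i | P i && (F i != 0)]) => [i /andP[]|none].
  by exists i.
case/eqP: nz; rewrite big1 // => i Pi.
by move: (none i); rewrite /= Pi => /negbFE/eqP.
Qed.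

Section BitFlipping.
Variables (P L : finType) (inc : P -> L -> bool).
Implicit Types (c e : {ffun L -> 'F_2}) (i : P) (j l : L).

Lemma mindist_le_wt c : c \in code inc -> (0 < wt c)%N -> (mindist inc <= wt c)%N.
Proof.
by move=> cC wc; rewrite /mindist -minEnat; apply: (@bigmin_le_cond _ nat); rewrite cC.
Qed.

Lemma syndrome_add_codeword c e i : c \in code inc ->
  syndrome inc [ffun j => c j + e j] i = syndrome inc e i.
Proof.
move=> /forallP/(_ i)/eqP cCi; rewrite /syndrome.
by under eq_bigr do rewrite ffunE; rewrite big_split /= [X in X + _]cCi add0r.
Qed.

Lemma unsat_add_codeword c e j : c \in code inc ->
  unsat inc [ffun j => c j + e j] j = unsat inc e j.
Proof. by move=> cC; apply: eq_card => i; rewrite !inE syndrome_add_codeword. Qed.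

Lemma syndromeD1 e i j : inc i j ->
  syndrome inc e i = e j + \sum_(l | inc i l && (l != j)) e l.
Proof. by move=> ij; rewrite /syndrome (bigD1 j). Qed.

Hypothesis lines_meet_once : forall i1 i2 l1 l2, i1 != i2 ->
  inc i1 l1 -> inc i2 l1 -> inc i1 l2 -> inc i2 l2 -> l1 = l2.

Lemma card_checks_disagreeing e j :
  (#|[set i | inc i j && (syndrome inc e i != e j)]| <= #|[set l | e l != 0%R] :\ j|)%N.
Proof.
set D := [set i | _]; pose g i := odflt j [pick l | [&& inc i l, l != j & e l != 0]].
have gP i : i \in D -> [&& inc i (g i), g i != j & e (g i) != 0].
  rewrite inE => /andP[ij]; rewrite (syndromeD1 _ ij) -subr_eq0 addrC addKr.
  case/exists_neq0_summand => l /andP[il lj] el; rewrite /g.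
  by case: pickP => [//|/(_ l)]; rewrite il lj el.
have g_inj : {in D &, injective g}.
  move=> i1 i2 Di1 Di2 gi12; apply/eqP/negPn/negP => ne12.
  have /and3P[i1g gj _] := gP _ Di1; have /and3P[i2g _ _] := gP _ Di2.
  move: Di1 Di2; rewrite !inE => /andP[i1j _] /andP[i2j _].
  by rewrite -gi12 in i2g; move: gj; rewrite (lines_meet_once ne12 i1g i2g i1j i2j) eqxx.
rewrite -(card_in_imset g_inj); apply/subset_leq_card/subsetP => _ /imsetP[i Di ->].
by case/and3P: (gP _ Di) => _ gj eg; rewrite !inE gj eg.
Qed.

Theorem bitflip_corrects (q : nat) c e : c \in code inc ->
  (forall l, q <= colweight inc l)%N -> (2 * wt e <= q)%N ->
  bitflip inc [ffun j => c j + e j] = c.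
Proof.
move=> cC wq we; apply/ffunP => j; rewrite !ffunE unsat_add_codeword //.
have wrong_le := card_checks_disagreeing e j.
have wt_e : wt e = ((e j != 0%R) + #|[set l | e l != 0%R] :\ j|)%N.
  by rewrite /wt (cardsD1 j) inE.
have colE : colweight inc j =
    (unsat inc e j + #|[set i | inc i j && (syndrome inc e i == 0%R)]|)%N.
  rewrite /colweight -(cardsID [set i | syndrome inc e i != 0%R]).
  by congr (_ + _)%N; apply: eq_card => i; rewrite !inE ?negbK // andbC.
have cw := wq j.
case: (eqVneq (e j) 0) => [ej0 | ].
- rewrite ej0 eqxx in wrong_le wt_e; rewrite /unsat in colE *.
  by rewrite ej0 addr0 ifN // -leqNgt; lia.
- rewrite F2_neq0 => /eqP ej1; rewrite ej1 oner_eq0 in wrong_le wt_e.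
  have satE : [set i | inc i j & syndrome inc e i == 0%R] =
              [set i | inc i j & syndrome inc e i != 1].
    by apply/setP => i; rewrite !inE -F2_neq0 negbK.
  rewrite satE in colE; rewrite ej1 -addrA (addrr_pchar2 pchar_F2) addr0 ifT //.
  lia.
Qed.

End BitFlipping.

Lemma card_set_option (T : finType) (P : pred (option T)) :
  #|[set o | P o]| = (P None + #|[set t | P (Some t)]|)%N.
Proof.
rewrite (cardsD1 None) inE; congr (_ + _)%N.
rewrite -(card_imset [set t | P (Some t)] Some_inj); apply: eq_card => -[t|]; rewrite !inE /=.
- by apply/idP/imsetP => [Pt | [t' + [->]]]; [exists t; rewrite ?inE | rewrite inE].
- by apply/esym/imsetP => -[].
Qed.

Section FiberWord.
Variables (P L I : finType) (inc : P -> L -> bool) (f : I -> L).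

(* Counting preimages mod 2 spares us proving [f] injective. *)
Definition fiber_word : {ffun L -> 'F_2} := [ffun j => \sum_(o | f o == j) 1].

Lemma syndrome_fiber_word i : syndrome inc fiber_word i = #|[set o | inc i (f o)]|%:R.
Proof.
rewrite /syndrome; under eq_bigr do rewrite ffunE.
rewrite [RHS](_ : _ = \sum_(o | inc i (f o)) 1); last by rewrite sumr_const cardsE.
rewrite (partition_big f (inc i)) //; apply: eq_bigr => j ij; apply: eq_bigl => o.
by case: eqP => [->|]; rewrite ?ij ?andbF.
Qed.

Lemma wt_fiber_word_le : (wt fiber_word <= #|I|)%N.
Proof.
rewrite -cardsT; apply: leq_trans (leq_imset_card f _).
apply/subset_leq_card/subsetP => j; rewrite inE ffunE; apply: contraR => nj.
by rewrite big_pred0 // => o; apply: contraNF nj => /eqP <-; apply: imset_f.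
Qed.

Lemma wt_fiber_word_gt0 o0 : (forall o, f o = f o0 -> o = o0) -> (0 < wt fiber_word)%N.
Proof.
move=> f_o0; rewrite card_gt0; apply/set0Pn; exists (f o0); rewrite inE ffunE.
by rewrite (big_pred1 o0) ?oner_eq0 // => o; apply/eqP/eqP => [/f_o0|->].
Qed.

End FiberWord.

Lemma eqmx_sub_rank (F : fieldType) m1 m2 n (A : 'M[F]_(m1, n)) (B : 'M[F]_(m2, n)) :
  (A <= B)%MS -> (\rank B <= \rank A)%N -> (A == B)%MS.
Proof.
move=> sAB leBA; rewrite -(mxrank_leqif_eq sAB).2 eqn_leq leBA andbT.
exact: mxrankS.
Qed.

Section ProjectivePlane.
Variable F : finFieldType.
Implicit Types (a v : 'rV[F]_3) (p : PGpoint F) (l : PGline F).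

Lemma genmx_subspace k (s : subspace_of_dim F k) : <<val s>>%MS = val s.
Proof. by case: s => A /= /andP[/eqP<-]. Qed.

Lemma rank_subspace k (s : subspace_of_dim F k) : \rank (val s) = k.
Proof. by case: s => A /= /andP[_ /eqP]. Qed.

Lemma subspace_inj k (s1 s2 : subspace_of_dim F k) : (val s1 == val s2)%MS -> s1 = s2.
Proof. by move/genmxP=> eq12; apply: val_inj; rewrite -genmx_subspace eq12 genmx_subspace. Qed.

Lemma subspace_basis k (s : subspace_of_dim F k) :
  exists2 B : 'M[F]_(k, 3), row_free B & (B == val s)%MS.
Proof.
case: s => A /= /andP[_ /eqP <-].
by exists (row_base A); [exact: row_base_free | apply/eqmxP; exact: eq_row_base].
Qed.

Lemma genmx_is_subspace (k m : nat) (A : 'M[F]_(m, 3)) : \rank A = k ->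
  (<<A>>%MS == <<<<A>>>>%MS) && (\rank <<A>>%MS == k).
Proof. by move=> rA; rewrite genmx_id genmxE rA !eqxx. Qed.

Definition subspace_of (k m : nat) (A : 'M[F]_(m, 3)) (s0 : subspace_of_dim F k) :=
  insubd s0 <<A>>%MS.

Lemma val_subspace_of (k m : nat) (A : 'M[F]_(m, 3)) (s0 : subspace_of_dim F k) :
  \rank A = k -> val (subspace_of A s0) = <<A>>%MS.
Proof. by move=> rA; apply: insubdK; apply: genmx_is_subspace. Qed.

Definition row3 (x y z : F) : 'rV[F]_3 := \row_k [:: x; y; z]`_k.

Lemma row3_eq0 x y z : (row3 x y z == 0) = [&& x == 0, y == 0 & z == 0].
Proof.
rewrite /row3; apply/eqP/and3P => [/rowP v0 | [/eqP-> /eqP-> /eqP->]].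
  by split; apply/eqP; [have := v0 0 | have := v0 1 | have := v0 2]; rewrite !mxE.
by apply/rowP => k; rewrite !mxE; case: k => [[|[|[|]]]].
Qed.

Lemma row3P v : exists x y z : F, v = row3 x y z.
Proof.
exists (v 0 0), (v 0 1), (v 0 2); rewrite /row3.
by apply/rowP => k; rewrite !mxE; case: k => [[|[|[|m]]] Hm] //; congr (v 0 _); apply: val_inj.
Qed.

Lemma mulmx_row3_tr (x y z a b c : F) :
  row3 x y z *m (row3 a b c)^T = (x * a + y * b + z * c)%:M.
Proof.
apply/matrixP => i j; rewrite /row3 !ord1 !mxE !big_ord_recl big_ord0 !mxE /=.
by rewrite addr0 addrA.
Qed.

Let base_vec : 'rV[F]_3 := row3 1 0 0.

Let rank_base_vec : \rank base_vec = 1%N.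
Proof. by rewrite rank_rV row3_eq0 oner_eq0. Qed.

Let rank_base_ker : \rank (kermx base_vec^T) = 2%N.
Proof. by rewrite mxrank_ker mxrank_tr rank_base_vec. Qed.

(* [line_of a] is the line with dual coordinates [a], the kernel of
   [x |-> x a^T]; both maps return junk on [0]. *)
Definition point_of v : PGpoint F :=
  subspace_of v (Sub <<base_vec>>%MS (genmx_is_subspace rank_base_vec)).
Definition line_of a : PGline F :=
  subspace_of (kermx a^T) (Sub <<kermx base_vec^T>>%MS (genmx_is_subspace rank_base_ker)).

Lemma val_point_of v : v != 0 -> val (point_of v) = <<v>>%MS.
Proof. by move=> v0; rewrite val_subspace_of // rank_rV v0. Qed.

Lemma val_line_of a : a != 0 -> val (line_of a) = <<kermx a^T>>%MS.
Proof. by move=> a0; rewrite val_subspace_of // mxrank_ker mxrank_tr rank_rV a0. Qed.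

Lemma PGpointP p :
  exists x y z : F, [|| x != 0, y != 0 | z != 0] /\ p = point_of (row3 x y z).
Proof.
have [B fB eqB] := subspace_basis p.
have [x [y [z defB]]] := row3P B.
exists x, y, z; split; first by rewrite -!negb_and -row3_eq0 -defB -mxrank_eq0 (eqP fB).
apply: val_inj; rewrite -defB val_point_of -?mxrank_eq0 ?(eqP fB) //.
by rewrite -genmx_subspace; apply/genmxP/eqmxP/eqmx_sym/eqmxP.
Qed.

Lemma PGinc_row3 (x y z a b c : F) : row3 x y z != 0 -> row3 a b c != 0 ->
  PGinc (point_of (row3 x y z)) (line_of (row3 a b c)) = (x * a + y * b + z * c == 0).
Proof.
move=> v0 a0; rewrite /PGinc val_point_of // val_line_of // !genmxE sub_kermx.
by rewrite mulmx_row3_tr -scalemx1 scalemx_eq0 oner_eq0 orbF.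
Qed.

Lemma PGinc_unique_line (p1 p2 : PGpoint F) (l1 l2 : PGline F) : p1 != p2 ->
  PGinc p1 l1 -> PGinc p2 l1 -> PGinc p1 l2 -> PGinc p2 l2 -> l1 = l2.
Proof.
move=> p12 p1l1 p2l1 p1l2 p2l2.
have rank_sum : (2 <= \rank (val p1 + val p2)%MS)%N.
  rewrite ltnNge; apply: contra p12 => le1; apply/eqP/subspace_inj.
  have rp := rank_subspace; have eq_sum (p : PGpoint F) (S : 'M_3) :
    (val p <= S)%MS -> (\rank S <= 1)%N -> (val p == S)%MS.
    by move=> sS rS; apply: eqmx_sub_rank; rewrite ?rp.
  apply/eqmxP; apply: eqmx_trans (eqmxP (eq_sum p1 _ (addsmxSl _ _) le1)) _.
  exact/eqmx_sym/eqmxP/(eq_sum p2 _ (addsmxSr _ _) le1).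
have on_line l : PGinc p1 l -> PGinc p2 l -> (val p1 + val p2 == val l)%MS.
  by move=> p1l p2l; apply: eqmx_sub_rank; rewrite ?addsmx_sub ?rank_subspace //; apply/andP.
apply: subspace_inj; apply/eqmxP.
exact: eqmx_trans (eqmx_sym (eqmxP (on_line _ p1l1 p2l1))) (eqmxP (on_line _ p1l2 p2l2)).
Qed.

Lemma card_field_le_colweight (l : PGline F) : (#|F| <= colweight (@PGinc F) l)%N.
Proof.
have [B fB /andP[sBl _]] := subspace_basis l.
pose w (t : F) : 'rV_3 := (\row_i [:: 1; t]`_i) *m B.
have w_neq0 t : w t != 0.
  rewrite -(mul0mx _ B) (inj_eq (row_free_inj fB)).
  by apply/eqP => /rowP/(_ 0); rewrite !mxE; apply/eqP; rewrite oner_eq0.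
have point_inj : injective (fun t => point_of (w t)).
  move=> t s /(congr1 val); rewrite !val_point_of // => /genmxP/andP[/sub_rVP[k]].
  rewrite /w scalemxAl => /(row_free_inj fB)/rowP r_eq _.
  have := r_eq 0; have := r_eq 1; rewrite !mxE /= mulr1 => -> <-.
  by rewrite mul1r.
rewrite -cardsT -(card_imset _ point_inj); apply/subset_leq_card/subsetP.
move=> _ /imsetP[t _ ->]; rewrite inE /PGinc val_point_of // genmxE.
exact: submx_trans (submxMl _ _) sBl.
Qed.

End ProjectivePlane.

Lemma pchar2_of_even_card (F : finFieldType) : ~~ odd #|F| -> (2 \in [pchar F])%N.
Proof.
have [p p_pr pchFp] := finPcharP F.
rewrite (card_pprimeChar pchFp) oddX negb_or => /andP[_ even_p].
by case: (even_prime p_pr) => [p2 | odd_p]; [rewrite -p2 | rewrite odd_p in even_p].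
Qed.

Lemma quadratic_roots (F : finFieldType) (x y z t0 : F) :
  z != 0 -> x + y * t0 + z * t0 ^+ 2 = 0 ->
  [set t | x + y * t + z * t ^+ 2 == 0] = [set t0; - (y / z) - t0].
Proof.
move=> z_neq0 root_t0; apply/setP => t; rewrite !inE.
have -> : x + y * t + z * t ^+ 2 = z * ((t - t0) * (t - (- (y / z) - t0))).
  have -> : x = - (y * t0 + z * t0 ^+ 2) by apply/eqP; rewrite -addr_eq0 addrA root_t0.
  by field.
by rewrite !mulf_eq0 (negbTE z_neq0) /= !subr_eq0.
Qed.

Section Char2.
Variables (F : finFieldType) (pchar2F : (2 \in [pchar F])%N).

Lemma sqrt_pchar2 (a : F) : exists t, t ^+ 2 = a.
Proof.
have sqr_inj : injective (fun t : F => t ^+ 2).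
  by move=> t s /=; rewrite -!(pFrobenius_autE pchar2F); apply: fmorph_inj.
by have [g _ gK] := injF_bij sqr_inj; exists (g a); apply: gK.
Qed.

Lemma odd_card_conic_roots (x y z : F) : [|| x != 0, y != 0 | z != 0] ->
  odd #|[set t | x + y * t + z * t ^+ 2 == 0]| = (y == 0) (+) (z == 0).
Proof.
move=> xyz_neq0; have [z0 | z_neq0] := eqVneq z 0.
  rewrite z0 addbT; under eq_finset do rewrite mul0r addr0.
  have [y0 | y_neq0] := eqVneq y 0.
    move: xyz_neq0; rewrite y0 z0 !eqxx orbF /= => x_neq0.
    by under eq_finset do rewrite mul0r addr0 (negbTE x_neq0); rewrite cards0.
  rewrite (_ : [set t | _] = [set - (x / y)]) ?cards1 //; apply/setP => t; rewrite !inE.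
  have -> : x + y * t = y * (t - - (x / y)) by field.
  by rewrite mulf_eq0 (negbTE y_neq0) subr_eq0.
rewrite addbF.
have roots_pair t0 : x + y * t0 + z * t0 ^+ 2 = 0 ->
    odd #|[set t | x + y * t + z * t ^+ 2 == 0]| = (y == 0).
  move=> root_t0; rewrite (quadratic_roots z_neq0 root_t0) cards2 /= oddb negbK.
  rewrite !(oppr_pchar2 pchar2F) -{1}[t0]add0r.
  by rewrite (can_eq (addrK t0)) eq_sym mulf_eq0 invr_eq0 (negbTE z_neq0) orbF.
have [y0 | y_neq0] := eqVneq y 0.
  have [t0 sqr_t0] := sqrt_pchar2 (x / z).
  suff /roots_pair-> : x + y * t0 + z * t0 ^+ 2 = 0 by rewrite y0 eqxx.
  by rewrite y0 mul0r addr0 sqr_t0 mulrC divfK // (addrr_pchar2 pchar2F).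
have [-> | [t0]] := set_0Vmem [set t | x + y * t + z * t ^+ 2 == 0].
  by rewrite cards0.
by rewrite inE => /eqP/roots_pair->; apply/negbTE.
Qed.

(* The q + 1 lines [a : b : c] with b^2 = a c form a dual conic; in
   characteristic 2 the line [0 : 1 : 0] is its dual nucleus, and adding it
   gives a dual hyperoval: every point lies on 0 or 2 of these q + 2 lines. *)
Definition hyperoval_line (o : option (option F)) : 'rV[F]_3 :=
  match o with
  | Some (Some t) => row3 1 t (t ^+ 2)
  | Some None => row3 0 0 1
  | None => row3 0 1 0
  end.

Definition hyperoval_word := fiber_word (fun o => line_of (hyperoval_line o)).

Lemma hyperoval_line_neq0 o : hyperoval_line o != 0.
Proof. by case: o => [[t|]|]; rewrite row3_eq0 oner_eq0 ?andbF. Qed.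

Lemma hyperoval_word_in_code : hyperoval_word \in code (@PGinc F).
Proof.
apply/forallP => p; have [x [y [z [xyz_neq0 ->]]]] := PGpointP p.
have v_neq0 : row3 x y z != 0 by rewrite row3_eq0 !negb_and.
have /= l0_neq0 := hyperoval_line_neq0 None.
have /= l1_neq0 := hyperoval_line_neq0 (Some None).
rewrite syndrome_fiber_word !card_set_option !PGinc_row3 //=.
have -> : [set t | PGinc (point_of (row3 x y z)) (line_of (hyperoval_line (Some (Some t))))]
        = [set t | x + y * t + z * t ^+ 2 == 0].
  by apply/setP => t; rewrite !inE PGinc_row3 ?mulr1 // row3_eq0 oner_eq0.
rewrite F2_natr !oddD !oddb odd_card_conic_roots //.
by rewrite !mulr0 !mulr1 !add0r addr0; case: (y == 0); case: (z == 0).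
Qed.

Lemma wt_hyperoval_word_gt0 : (0 < wt hyperoval_word)%N.
Proof.
have /= l0_neq0 := hyperoval_line_neq0 None.
have /= l1_neq0 := hyperoval_line_neq0 (Some None).
have /= l2_neq0 t := hyperoval_line_neq0 (Some (Some t)).
have p0_neq0 : row3 1 0 0 != 0 :> 'rV[F]_3 by rewrite row3_eq0 oner_eq0.
apply: (wt_fiber_word_gt0 (o0 := None)) => -[[t|]|] //.
  move/(congr1 (PGinc (point_of (row3 1 0 0)))); rewrite !PGinc_row3 //.
  by rewrite !mul0r !mulr0 mulr1 !addr0 eqxx oner_eq0.
move/(congr1 (PGinc (point_of (row3 0 0 1)))); rewrite !PGinc_row3 //.
by rewrite !mul0r !mulr0 mulr1 !add0r eqxx oner_eq0.
Qed.

Lemma wt_hyperoval_word_le : (wt hyperoval_word <= #|F|.+2)%N.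
Proof. by have := wt_fiber_word_le (fun o => line_of (hyperoval_line o)); rewrite !card_option. Qed.

End Char2.

Unset Implicit Arguments.

Theorem theorem3p5 (F : finFieldType) (q_even : ~~ odd #|F|)
    (c e : {ffun PGline F -> 'F_2}) :
  c \in code (@PGinc F) ->
  (wt e <= (mindist (@PGinc F)).-1./2)%N ->
  bitflip (@PGinc F) [ffun j => c j + e j] = c.
Proof.
move=> cC wt_e.
have pchar2F := pchar2_of_even_card q_even.
have d_le : (mindist (@PGinc F) <= #|F|.+2)%N.
  apply: leq_trans (wt_hyperoval_word_le F).
  exact: mindist_le_wt (hyperoval_word_in_code pchar2F) (wt_hyperoval_word_gt0 F).
apply: (bitflip_corrects (@PGinc_unique_line F) cC (@card_field_le_colweight F)).
lia.
Qed.
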